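(* Let $T$ be a term rewriting system that is disjoint and has no collapsing rules. Then every reduction sequence of $T$ is convergent (i.e. $T$ is infinitary strongly normalising, $SN^\infty$).
   Context: $T=(\Sigma,R)$ with $\Sigma$ a finite signature and $R$ a set of rules $l\to r$ over finite or infinite terms, $l$ finite and not a variable, variables of $r$ occurring in $l$. $T$ is disjoint iff the set of function symbols occurring in left-hand sides is disjoint from the set of function symbols occurring in right-hand sides. A rule $l\to r$ is collapsing iff $r$ is a variable. Terms are finite or infinite trees; $d(t,u)=0$ if $t=u$, else $2^{-k}$ with $k$ the least depth where they differ; limits w.r.t. $d$. A reduction step $a=\langle t,p,\mu,\sigma\rangle$ has $t|_p=\sigma l$, target $t[\sigma r]_p$, depth $|p|$. A reduction sequence is an empty sequence $id_t$ or a sequence $\langle a_\alpha\rangle_{\alpha<\beta}$ ($\beta>0$ an ordinal) of steps with $src(a_{\alpha+1})=tgt(a_\alpha)$ for $\alpha+1<\beta$ and, for each limit ordinal $\beta_0<\beta$: $\lim_{\alpha\to\beta_0}tgt(a_\alpha)$ exists and equals $src(a_{\beta_0})$, and for every $n<\omega$ there is $\beta'<\beta_0$ such that every $a_\alpha$ with $\beta'<\alpha<\beta_0$ has depth $>n$. It is convergent iff it is empty, $\beta$ is a successor, or $\beta$ is a limit and $\lim_{\alpha\to\beta}tgt(a_\alpha)$ exists and the depth condition also holds at $\beta$. *)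

(* Terms (finite or infinite) are represented positionally: a term is a map
   from positions (sequences of child indices) to optional labels, where a
   label is a function symbol (inl f) or a variable (inr x, x : nat). *)
From mathcomp Require Import all_boot.

Set Implicit Arguments.
Unset Strict Implicit.
Unset Printing Implicit Defensive.

Section TRS.
Variables (F : finType) (ar : F -> nat).

Definition label := (F + nat)%type.
Definition position := seq nat.
Definition rawterm := position -> option label.

Definition wf_term (t : rawterm) : Prop :=
  t [::] <> None /\
  forall p : position,
    match t p with
    | Some (inl f) => forall i, t (rcons p i) <> None <-> i < ar f
    | _ => forall i, t (rcons p i) = None
    end.

Record term := Term { fn : rawterm; fn_wf : wf_term fn }.

Definition finite_term (t : rawterm) : Prop :=
  exists s : seq position, forall p, t p <> None -> p \in s.

Fixpoint subst_go (sigma : nat -> term) (r : rawterm) (pre rest : position)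
  : option label :=
  match r pre with
  | None => None
  | Some (inr x) => fn (sigma x) rest
  | Some (inl f) =>
      match rest with
      | [::] => Some (inl f)
      | i :: rest' => subst_go sigma r (rcons pre i) rest'
      end
  end.

Definition subst (sigma : nat -> term) (r : rawterm) : rawterm :=
  fun q => subst_go sigma r [::] q.

Definition replace (t : rawterm) (p : position) (s : rawterm) : rawterm :=
  fun q => if take (size p) q == p then s (drop (size p) q) else t q.

Record rule := Rule {
  lhs : term;
  rhs : term;
  lhs_finite : finite_term (fn lhs);
  lhs_not_var : exists f, fn lhs [::] = Some (inl f);
  rhs_vars : forall p x, fn rhs p = Some (inr x) -> exists q, fn lhs q = Some (inr x)
}.

Definition collapsing (rho : rule) : Prop := exists x, fn (rhs rho) [::] = Some (inr x).

Definition disjoint_trs (R : rule -> Prop) : Prop :=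
  forall rho rho' f p q, R rho -> R rho' ->
    fn (lhs rho) p = Some (inl f) -> fn (rhs rho') q = Some (inl f) -> False.

Definition no_collapsing (R : rule -> Prop) : Prop :=
  forall rho, R rho -> ~ collapsing rho.

Record step (R : rule -> Prop) := Step {
  src : term;
  pos : position;
  rl : rule;
  rl_in : R rl;
  sig : nat -> term;
  step_match : forall q, fn src (pos ++ q) = subst sig (fn (lhs rl)) q
}.

Definition tgt R (a : step R) : rawterm :=
  replace (fn (src a)) (pos a) (subst (sig a) (fn (rhs (rl a)))).

Definition depth R (a : step R) : nat := size (pos a).

(* d(t,u) < 2^-n  iff t and u agree at all positions of depth <= n *)
Definition agree_upto (n : nat) (t u : rawterm) : Prop :=
  forall p : position, size p <= n -> t p = u p.

(* ordinals beta are represented by well-ordered index types I (I = beta) *)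
Definition well_order (I : Type) (lt : I -> I -> Prop) : Prop :=
  well_founded lt /\ (forall x y z, lt x y -> lt y z -> lt x z) /\
  (forall x y, lt x y \/ x = y \/ lt y x).

Definition is_succ (I : Type) (lt : I -> I -> Prop) (x y : I) : Prop :=
  lt x y /\ forall z, lt x z -> lt z y -> False.

Definition is_limit (I : Type) (lt : I -> I -> Prop) (b : I) : Prop :=
  (exists g, lt g b) /\ forall g, lt g b -> exists d, lt g d /\ lt d b.

Definition reduction_sequence R (I : Type) (lt : I -> I -> Prop)
  (a : I -> step R) : Prop :=
  (forall x y, is_succ lt x y -> fn (src (a y)) = tgt (a x)) /\
  (forall b, is_limit lt b ->
     (forall n, exists b', lt b' b /\
        forall x, lt b' x -> lt x b -> agree_upto n (tgt (a x)) (fn (src (a b)))) /\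
     (forall n, exists b', lt b' b /\
        forall x, lt b' x -> lt x b -> n < depth (a x))).

Definition convergent R (I : Type) (lt : I -> I -> Prop) (a : I -> step R)
  : Prop :=
  (I -> False) \/
  (* beta is a successor ordinal: there is a last step *)
  (exists m : I, forall x, x = m \/ lt x m) \/
  ((exists t : term, forall n, exists b', forall x, lt b' x ->
        agree_upto n (tgt (a x)) (fn t)) /\
   (forall n, exists b', forall x, lt b' x -> n < depth (a x))).

End TRS.

(* Call a step at position q "above" p when q is a prefix of p.  Fix p and suppose
   that from some point on no step occurs strictly above p.  Once a step is
   performed at p itself, p carries the root symbol of a right-hand side (no rule
   collapses), and disjointness forbids any left-hand side from matching there;
   since nothing above p can change it, p is never rewritten again.  By induction
   on p, every position is eventually untouched, and as the signature is finite
   there are only finitely many positions of bounded length: eventually every step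
   is deeper than any given n.  Hence the depth condition holds at the end of the
   sequence, the terms stabilise at every depth, and their limit exists. *)
From Stdlib Require Import Classical IndefiniteDescription.
From mathcomp Require Import all_boot.

Set Implicit Arguments.
Unset Strict Implicit.
Unset Printing Implicit Defensive.

Lemma size_lt_prefixN (T : eqType) (s p : seq T) : size p < size s -> ~~ prefix s p.
Proof.
move=> lt_ps; apply/negP => /prefixP [r p_eq].
by move: lt_ps; rewrite p_eq size_cat ltnNge leq_addr.
Qed.

Lemma prefix_rconsP (T : eqType) (s q : seq T) i :
  prefix s (rcons q i) -> s = rcons q i \/ prefix s q.
Proof.
case/prefixP => r; case/lastP: r => [|r j]; first by rewrite cats0; left.
rewrite -rcons_cat => /eqP; rewrite eqseq_rcons => /andP [/eqP -> _].
by right; exact: prefix_prefix.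
Qed.

Section Eventually.
Variables (I : Type) (lt : I -> I -> Prop).
Hypothesis lt_wo : well_order lt.

Definition eventually (P : I -> Prop) : Prop := exists b, forall x, lt b x -> P x.

Lemma wo_trans x y z : lt x y -> lt y z -> lt x z.
Proof. exact: (proj1 (proj2 lt_wo)). Qed.

Lemma wo_total x y : lt x y \/ x = y \/ lt y x.
Proof. exact: (proj2 (proj2 lt_wo)). Qed.

Lemma wo_max2 u v : exists2 g, g = u \/ g = v & forall x, lt g x -> lt u x /\ lt v x.
Proof.
case: (wo_total u v) => [uv|[<-|vu]].
- by exists v; [right | move=> x vx; split => //; exact: wo_trans uv vx].
- by exists u; [left | ].
- by exists u; [left | move=> x ux; split => //; exact: wo_trans vu ux].
Qed.

Lemma wo_succ_or_limit x y : lt x y -> (exists w, is_succ lt w y) \/ is_limit lt y.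
Proof.
move=> xy; have [|no_pred] := classic (exists w, is_succ lt w y); first by left.
right; split; first by exists x.
move=> g gy; apply: NNPP => no_between; apply: no_pred; exists g; split => // z gz zy.
by apply: no_between; exists z.
Qed.

Lemma wo_no_last_nomax :
  ~ (exists m, forall x, x = m \/ lt x m) -> forall x, exists y, lt x y.
Proof.
move=> no_last x; apply: NNPP => x_max; apply: no_last; exists x => y.
case: (wo_total y x) => [|[|xy]]; [by right | by left | by case: x_max; exists y].
Qed.

Lemma eventually_and P Q :
  eventually P -> eventually Q -> eventually (fun x => P x /\ Q x).
Proof.
move=> [b1 P_b1] [b2 Q_b2]; have [g _ g_up] := wo_max2 b1 b2.
by exists g => x /g_up [b1x b2x]; split; [exact: P_b1 | exact: Q_b2].
Qed.

Variable i0 : I.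

Lemma eventually_forall_lt m (Q : nat -> I -> Prop) :
  (forall i, i < m -> eventually (Q i)) -> eventually (fun x => forall i, i < m -> Q i x).
Proof.
elim: m => [|m IHm] Q_ev; first by exists i0.
have [b Q_b] := eventually_and (IHm (fun i lt_im => Q_ev i (ltnW lt_im))) (Q_ev m (ltnSn m)).
exists b => x /Q_b [Q_lt Q_m] i; rewrite ltnS leq_eqVlt => /orP [/eqP -> // | ].
exact: Q_lt.
Qed.

Lemma eventually_bounded_paths (Q : seq nat -> I -> Prop) m k :
  (forall p, eventually (Q p)) ->
  eventually (fun x => forall p, size p = k -> all (fun i => i < m) p -> Q p x).
Proof.
elim: k Q => [|k IHk] Q Q_ev.
  by have [b Q_b] := Q_ev [::]; exists b => x bx [|//] _ _; exact: Q_b.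
have [b Q_b] := @eventually_forall_lt m
  (fun i x => forall p, size p = k -> all (fun j => j < m) p -> Q (i :: p) x)
  (fun i _ => IHk (fun p => Q (i :: p)) (fun p => Q_ev (i :: p))).
by exists b => x bx [//|i p] [size_p] /andP [lt_im p_bounded]; exact: Q_b.
Qed.

End Eventually.

Section TermLimit.
Variables (F : finType) (ar : F -> nat) (I : Type) (lt : I -> I -> Prop).
Hypotheses (lt_wo : well_order lt) (lt_nomax : forall x, exists y, lt x y).

Lemma agree_uptoW m n (t u : rawterm F) : m <= n -> agree_upto n t u -> agree_upto m t u.
Proof. by move=> mn tu p pm; apply: tu; exact: leq_trans pm mn. Qed.

Lemma term_limit (u : I -> term ar) :
  (forall n, exists b, forall x y, lt b x -> lt b y -> agree_upto n (fn (u x)) (fn (u y))) ->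
  exists t : term ar, forall n, eventually lt (fun x => agree_upto n (fn (u x)) (fn t)).
Proof.
move=> cauchy; have [B u_B] := functional_choice _ cauchy.
have [c Bc] := functional_choice _ (fun n => lt_nomax (B n)).
have agree m n x y : m <= n -> lt (B n) x -> lt (B m) y -> agree_upto m (fn (u x)) (fn (u y)).
  move=> mn Bnx Bmy; have [g _ g_up] := wo_max2 lt_wo (B n) (B m).
  have [z gz] := lt_nomax g; have [Bnz Bmz] := g_up z gz.
  move=> p pm; rewrite (agree_uptoW mn (u_B n x z Bnx Bnz)) //.
  by rewrite (u_B m y z Bmy Bmz).
(* Read p off at a stage beyond which the terms agree up to depth size p. *)
pose t p := fn (u (c (size p))) p.
have t_next p : t p = fn (u (c (size p).+1)) p.
  by symmetry; exact: agree (size p) _ _ _ (leqnSn _) (Bc _) (Bc _) p (leqnn _).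
have t_wf : wf_term ar t.
  split; first exact: (proj1 (fn_wf _)).
  move=> p; rewrite t_next; have := proj2 (fn_wf (u (c (size p).+1))) p.
  by case: (fn _ p) => [[f|x]|] wf_p i; rewrite /t size_rcons; exact: wf_p.
exists (@Term F ar t t_wf) => n; exists (B n) => x Bnx p pn /=.
exact: agree (size p) n x _ pn Bnx (Bc _) p (leqnn _).
Qed.

End TermLimit.

Section Steps.
Variables (F : finType) (ar : F -> nat) (R : rule ar -> Prop).

Definition max_arity : nat := \max_(f : F) ar f.

Lemma pos_lt_max_arity (t : term ar) p :
  fn t p <> None -> all (fun i => i < max_arity) p.
Proof.
elim/last_ind: p => [//|q i IHq] t_p; rewrite all_rcons.
have := proj2 (fn_wf t) q; case t_q: (fn t q) => [[f|x]|] children.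
- rewrite IHq ?t_q // andbT; apply: leq_trans (leq_bigmax f).
  exact/(children i).
- by case: t_p; exact: children.
- by case: t_p; exact: children.
Qed.

Lemma redex_root (s : step R) :
  exists2 f, fn (src s) (pos s) = Some (inl f) & fn (lhs (rl s)) [::] = Some (inl f).
Proof.
have := step_match s [::]; rewrite cats0 /subst /=.
by case: (lhs_not_var (rl s)) => f lhs_f; rewrite lhs_f => ->; exists f.
Qed.

Lemma contractum_root (s : step R) : ~ collapsing (rl s) ->
  exists2 g, tgt s (pos s) = Some (inl g) & fn (rhs (rl s)) [::] = Some (inl g).
Proof.
move=> noncollapsing; rewrite /tgt /replace take_size eqxx drop_size /subst /=.
case rhs_root: (fn (rhs (rl s)) [::]) => [[g|x]|]; first by exists g.
- by case: noncollapsing; exists x.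
- by case: (proj1 (fn_wf (rhs (rl s)))).
Qed.

Lemma tgt_notin (s : step R) p : ~~ prefix (pos s) p -> tgt s p = fn (src s) p.
Proof. by rewrite /tgt /replace -prefixE => /negPf ->. Qed.

Lemma contractum_not_redex (s s' : step R) : disjoint_trs R -> no_collapsing R ->
  fn (src s') (pos s') <> tgt s (pos s).
Proof.
move=> disj nocol; have [f -> lhs_f] := redex_root s'.
have [g -> rhs_g] := contractum_root (nocol _ (rl_in s)).
by case=> fg; subst g; exact: disj (rl_in s') (rl_in s) lhs_f rhs_g.
Qed.

End Steps.

Section Sequence.
Variables (F : finType) (ar : F -> nat) (R : rule ar -> Prop).
Hypotheses (disj : disjoint_trs R) (nocol : no_collapsing R).
Variables (I : Type) (lt : I -> I -> Prop) (a : I -> step R).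
Hypotheses (lt_wo : well_order lt) (red : reduction_sequence lt a).

Lemma src_stable x0 p :
  (forall y, lt x0 y -> fn (src (a y)) p = tgt (a x0) p -> ~~ prefix (pos (a y)) p) ->
  forall y, lt x0 y -> fn (src (a y)) p = tgt (a x0) p.
Proof.
move=> avoid y; elim/(well_founded_ind (proj1 lt_wo)): y => y IH x0y.
have stays x : lt x y -> x = x0 \/ lt x0 x -> tgt (a x) p = tgt (a x0) p.
  by move=> xy [-> // | x0x]; rewrite tgt_notin ?IH //; exact/avoid/IH.
case: (wo_succ_or_limit x0y) => [[x [xy x_pred]] | y_limit].
  rewrite (proj1 red x y (conj xy x_pred)); apply: stays => //.
  by case: (wo_total lt_wo x x0) => [xx0 | [-> | x0x]]; [case: (x_pred x0) | left | right].
have [b [b_y near_y]] := proj1 (proj2 red y y_limit) (size p).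
have [g gbx0 g_up] := wo_max2 lt_wo b x0.
have gy : lt g y by case: gbx0 => ->.
have [d [gd dy]] := proj2 y_limit g gy.
have [bd x0d] := g_up d gd.
by rewrite -(near_y d bd dy p (leqnn _)); apply: stays => //; right.
Qed.

Lemma steps_settle_at p :
  eventually lt (fun x => prefix (pos (a x)) p -> pos (a x) = p) ->
  eventually lt (fun x => ~~ prefix (pos (a x)) p).
Proof.
move=> [b only_at_p].
have [[x0 [bx0 x0p]] | none_at_p] := classic (exists x0, lt b x0 /\ pos (a x0) = p); last first.
  exists b => x bx; apply/negP => /(only_at_p x bx) xp.
  by apply: none_at_p; exists x.
have avoid y : lt x0 y -> fn (src (a y)) p = tgt (a x0) p -> ~~ prefix (pos (a y)) p.
  move=> x0y same; apply/negP => /(only_at_p y (wo_trans lt_wo bx0 x0y)) yp.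
  by case: (contractum_not_redex (s := a x0) (s' := a y) disj nocol); rewrite yp x0p.
by exists x0 => y x0y; exact: avoid x0y (src_stable avoid x0y).
Qed.

Variable i0 : I.

Lemma steps_eventually_avoid p : eventually lt (fun x => ~~ prefix (pos (a x)) p).
Proof.
elim/last_ind: p => [|q i IHq]; apply: steps_settle_at.
  by exists i0 => x _; rewrite prefixs0 => /eqP.
case: IHq => b avoid_q; exists b => x bx /prefix_rconsP [// | q_x].
by case/negP: (avoid_q x bx).
Qed.

Lemma depth_eventually_gt n : eventually lt (fun x => n < depth (a x)).
Proof.
have [b avoid] := eventually_forall_lt lt_wo i0 (m := n.+1)
  (fun k _ => eventually_bounded_paths lt_wo i0 (max_arity ar) k steps_eventually_avoid).
exists b => x bx; rewrite ltnNge; apply/negP => shallow.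
have [f redex _] := redex_root (a x).
have bounded : all (fun i => i < max_arity ar) (pos (a x)).
  by apply: (pos_lt_max_arity (t := src (a x))); rewrite redex.
by have := avoid x bx _ shallow _ erefl bounded; rewrite prefix_refl.
Qed.

Lemma srcs_cauchy n : exists b, forall x y, lt b x -> lt b y ->
  agree_upto n (fn (src (a x))) (fn (src (a y))).
Proof.
have [b deep] := depth_eventually_gt n.
have above x p : lt b x -> size p <= n -> ~~ prefix (pos (a x)) p.
  by move=> bx pn; apply: size_lt_prefixN; exact: leq_ltn_trans pn (deep x bx).
have later x y : lt b x -> lt x y -> agree_upto n (fn (src (a x))) (fn (src (a y))).
  move=> bx xy p pn; rewrite (src_stable _ xy) ?tgt_notin ?above //.
  by move=> z xz _; exact: above (wo_trans lt_wo bx xz) pn.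
exists b => x y bx b_y; case: (wo_total lt_wo x y) => [xy | [<- // | yx]].
  exact: later.
by move=> p pn; symmetry; exact: later.
Qed.

Lemma tgts_converge : (forall x, exists y, lt x y) ->
  exists t : term ar, forall n, eventually lt (fun x => agree_upto n (tgt (a x)) (fn t)).
Proof.
move=> nomax; have [t lim] := term_limit lt_wo nomax srcs_cauchy.
exists t => n; have [b1 near] := lim n; have [b2 deep] := depth_eventually_gt n.
have [g _ g_up] := wo_max2 lt_wo b1 b2.
exists g => x /g_up [b1x b2x] p pn; rewrite tgt_notin; first exact: near.
by apply: size_lt_prefixN; exact: leq_ltn_trans pn (deep x b2x).
Qed.

End Sequence.

Theorem mainTheorem11 (F : finType) (ar : F -> nat) (R : rule ar -> Prop) :
  disjoint_trs R -> no_collapsing R ->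
  forall (I : Type) (lt : I -> I -> Prop) (a : I -> step R),
    well_order lt -> reduction_sequence lt a -> convergent lt a.
Proof.
move=> disj nocol I lt a lt_wo red.
have [[i0 _] | empty] := classic (exists i : I, True); last first.
  by left => i; apply: empty; exists i.
have [[m m_last] | no_last] := classic (exists m, forall x, x = m \/ lt x m).
  by right; left; exists m.
right; right; split.
- exact (tgts_converge disj nocol lt_wo red i0 (wo_no_last_nomax lt_wo no_last)).
- exact (depth_eventually_gt disj nocol lt_wo red i0).
Qed.
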